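(* Let $k$ be a field, let $\mathsf{E}$ be a locally finite $k$-linear category, and let $M$ be a locally finite left $\mathsf{E}$-module. Then $M$ is isomorphic to $\Upsilon_\mathsf{E}(\mathcal{M})$ for some (locally finite) left $\mathcal{C}_\mathsf{E}$-comodule $\mathcal{M}$ if and only if, for every object $x\in\mathsf{E}$, the set of all objects $y\in\mathsf{E}$ for which the action map $\operatorname{Hom}_\mathsf{E}(x,y)\otimes_kM(x)\to M(y)$ is nonzero is finite.
   Context: A small $k$-linear category $\mathsf{E}$ has $k$-vector spaces $\operatorname{Hom}_\mathsf{E}(x,y)$, $k$-bilinear associative composition and identities, with $\mathrm{id}_x\neq0$ for all objects $x$. A left $\mathsf{E}$-module is a $k$-linear functor $M:\mathsf{E}\to k\text{-Vect}$ (spaces $M(x)$, action maps $\operatorname{Hom}_\mathsf{E}(x,y)\otimes_kM(x)\to M(y)$); it is locally finite if every $M(x)$ is finite-dimensional. Write $x\preceq y$ if there are $n\ge1$ and objects $x=z_0,\dots,z_n=y$ with $\operatorname{Hom}_\mathsf{E}(z_{i-1},z_i)\neq0$ for all $i$. $\mathsf{E}$ is locally finite if all $\operatorname{Hom}_\mathsf{E}(x,y)$ are finite-dimensional and every set $\{z:x\preceq z\preceq y\}$ is finite. $\mathcal{C}_\mathsf{E}=\bigoplus_{x,y}\mathcal{C}^{x,y}$, $\mathcal{C}^{x,y}=\operatorname{Hom}_\mathsf{E}(x,y)^*$; counit zero on $\mathcal{C}^{x,y}$ for $x\ne y$ and evaluation at $\mathrm{id}_x$ on $\mathcal{C}^{x,x}$;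 comultiplication $\mathcal{C}^{x,y}\to\bigoplus_z\mathcal{C}^{x,z}\otimes\mathcal{C}^{z,y}$ with components dual to composition $\operatorname{Hom}_\mathsf{E}(x,z)\otimes\operatorname{Hom}_\mathsf{E}(z,y)\to\operatorname{Hom}_\mathsf{E}(x,y)$, $g\otimes h\mapsto hg$. For a left $\mathcal{C}_\mathsf{E}$-comodule $(\mathcal{M},\nu:\mathcal{M}\to\mathcal{C}_\mathsf{E}\otimes\mathcal{M})$ and $\varphi\in\mathcal{C}_\mathsf{E}^*$ set $\varphi\cdot m=(\varphi\otimes\mathrm{id})\nu(m)$. Let $e_x\in\mathcal{C}_\mathsf{E}^*$ be evaluation at $\mathrm{id}_x$ on $\mathcal{C}^{x,x}$ and zero elsewhere; for $f\in\operatorname{Hom}_\mathsf{E}(x,y)$ let $\mathrm{ev}_f$ be evaluation at $f$ on $\mathcal{C}^{x,y}$ and zero elsewhere. The comodule inclusion functor $\Upsilon_\mathsf{E}$ sends $\mathcal{M}$ to the left $\mathsf{E}$-module with $\Upsilon_\mathsf{E}(\mathcal{M})(x)=e_x\cdot\mathcal{M}$ (one has $\mathcal{M}=\bigoplus_xe_x\cdot\mathcal{M}$), $f\in\operatorname{Hom}_\mathsf{E}(x,y)$ acting by $m\mapsto\mathrm{ev}_f\cdot m\in e_y\cdot\mathcal{M}$; on morphisms it takes restrictions. A comodule $\mathcal{M}$ is locally finite if $\Upsilon_\mathsf{E}(\mathcal{M})$ is. *)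

From HB Require Import structures.
From mathcomp Require Import all_boot all_algebra.
From Stdlib Require List.

Set Implicit Arguments.
Unset Strict Implicit.
Unset Printing Implicit Defensive.

Import GRing.Theory.
Local Open Scope ring_scope.

(* Small k-linear categories whose HomE spaces are finite-dimensional   *)
(* (vectType k).  Finite-dimensionality of HomE spaces is the first half *)
(* of "locally finite"; the interval-finiteness half is [lf_cat] below. *)
Record klinCat (k : fieldType) := KLinCat {
  Obj : Type;
  HomE : Obj -> Obj -> vectType k;
  comp : forall x y z : Obj, HomE y z -> HomE x y -> HomE x z;
  idm : forall x : Obj, HomE x x;
  comp_linl : forall x y z (g : HomE x y) (a : k) (h1 h2 : HomE y z),
      comp (a *: h1 + h2) g = a *: comp h1 g + comp h2 g;
  comp_linr : forall x y z (h : HomE y z) (a : k) (g1 g2 : HomE x y),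
      comp h (a *: g1 + g2) = a *: comp h g1 + comp h g2;
  compA : forall w x y z (f : HomE w x) (g : HomE x y) (h : HomE y z),
      comp h (comp g f) = comp (comp h g) f;
  comp1l : forall x y (f : HomE x y), comp (idm y) f = f;
  comp1r : forall x y (f : HomE x y), comp f (idm x) = f;
  idm_neq0 : forall x, idm x != 0
}.

Arguments HomE {k} _ _ _.
Arguments comp {k} _ {x y z} _ _.
Arguments idm {k} _ _.

Inductive prec (k : fieldType) (E : klinCat k) (x : Obj E) : Obj E -> Prop :=
| prec1 y : (exists f : HomE E x y, f != 0) -> @prec k E x y
| precS y z : @prec k E x y -> (exists f : HomE E y z, f != 0) -> @prec k E x z.

Definition lf_cat (k : fieldType) (E : klinCat k) : Prop :=
  forall x y : Obj E, exists s : seq (Obj E),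
    forall z, prec x z -> prec z y -> List.In z s.

Record lfModule (k : fieldType) (E : klinCat k) := LFModule {
  Mob : Obj E -> vectType k;
  act : forall x y : Obj E, HomE E x y -> Mob x -> Mob y;
  act_linl : forall x y (v : Mob x) (a : k) (f1 f2 : HomE E x y),
      act (a *: f1 + f2) v = a *: act f1 v + act f2 v;
  act_linr : forall x y (f : HomE E x y) (a : k) (v1 v2 : Mob x),
      act f (a *: v1 + v2) = a *: act f v1 + act f v2;
  act_id : forall x (v : Mob x), act (idm E x) v = v;
  act_comp : forall x y z (g : HomE E x y) (h : HomE E y z) (v : Mob x),
      act (comp E h g) v = act h (act g v)
}.

Arguments act {k E} _ {x y} _ _.

(* Left C_E-comodules.  Since each HomE(x,y) is finite-dimensional,     *)
(*   C_E (x) V = (+)_{x,y} HomE(x,y)^* (x) V = (+)_{x,y} Lin(HomE(x,y),V) *)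
(* so a coaction nu : V -> C_E (x) V is recorded by its components     *)
(*   coact x y : V -> HomE(x,y) -> V,  coact x y m f = (ev_f (x) id) nu(m),*)
(* bilinear, with finite support in (x,y) for each m (direct sum).     *)
(* The counit and coassociativity axioms are written componentwise.    *)
Record comodule (k : fieldType) (E : klinCat k) := Comodule {
  Cv : lmodType k;
  coact : forall x y : Obj E, Cv -> HomE E x y -> Cv;
  coact_linl : forall x y (f : HomE E x y) (a : k) (m1 m2 : Cv),
      coact (a *: m1 + m2) f = a *: coact m1 f + coact m2 f;
  coact_linr : forall x y (m : Cv) (a : k) (f1 f2 : HomE E x y),
      coact m (a *: f1 + f2) = a *: coact m f1 + coact m f2;
  (* nu(m) lies in the direct sum: finitely many nonzero components *)
  coact_fin : forall m : Cv, exists s : seq (Obj E * Obj E),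
      forall x y (f : HomE E x y), coact m f != 0 -> List.In (x, y) s;
  (* counit: (eps (x) id) nu = id, i.e. m = sum_x coact x x m (id_x) *)
  coact_counit : forall m : Cv, exists xs : seq (Obj E),
      List.NoDup xs /\
      (forall x, coact m (idm E x) != 0 -> List.In x xs) /\
      m = \sum_(x <- xs) coact m (idm E x);
  (* coassociativity: (Delta (x) id) nu = (id (x) nu) nu, componentwise:
     component C^{x,z} (x) C^{z,y} (x) V ...                           *)
  coact_coassoc : forall x z y (m : Cv) (g : HomE E x z) (h : HomE E z y),
      coact (coact m g) h = coact m (comp E h g);
  (* ... and components C^{x,z} (x) C^{z',y} (x) V with z <> z' vanish *)
  coact_coassoc0 : forall x z z' y (m : Cv) (g : HomE E x z) (h : HomE E z' y),
      z <> z' -> coact (coact m g) h = 0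
}.

Arguments coact {k E} _ {x y} _ _.

Unset Implicit Arguments.
Definition e_act (k : fieldType) (E : klinCat k) (C : comodule E) (x : Obj E)
  (m : Cv C) : Cv C := coact C m (idm E x).
Arguments e_act {k E} C x m.
Definition ev_act (k : fieldType) (E : klinCat k) (C : comodule E) (x y : Obj E)
  (f : HomE E x y) (m : Cv C) : Cv C := coact C m f.
Arguments ev_act {k E} C {x y} f m.

Definition Ups_ob (k : fieldType) (E : klinCat k) (C : comodule E) (x : Obj E)
  (m : Cv C) : Prop := exists m' : Cv C, m = e_act C x m'.
Arguments Ups_ob {k E} C x m.

Definition iso_Ups (k : fieldType) (E : klinCat k) (M : lfModule E)
  (C : comodule E) : Prop :=
  exists phi : forall x : Obj E, Mob M x -> Cv C,
    (forall x (a : k) (u v : Mob M x), phi x (a *: u + v) = a *: phi x u + phi x v) /\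
    (forall x, injective (phi x)) /\
    (forall x (v : Mob M x), Ups_ob C x (phi x v)) /\
    (forall x (m : Cv C), Ups_ob C x m -> exists v : Mob M x, phi x v = m) /\
    (forall x y (f : HomE E x y) (v : Mob M x),
        phi y (act M f v) = ev_act C f (phi x v)).
Arguments iso_Ups {k E} M C.
Set Implicit Arguments.

From Pilot Require Import Defs.
From HB Require Import structures.
From mathcomp Require Import all_boot all_algebra.
From mathcomp Require Import boolp.
From Stdlib Require List.

Set Implicit Arguments.
Unset Strict Implicit.
Unset Printing Implicit Defensive.

Import GRing.Theory.
Local Open Scope ring_scope.

(* If M is Upsilon of a comodule C, the action of f on v is the component
   ev_f of the coaction of (the image of) v, and each coaction has finite
   support; since M(x) is finite-dimensional, the finitely many coactions of a
   basis of M(x) bound all y reached from x.  Conversely, when the support is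
   finite, the direct sum of the M(x) is a comodule: the coaction sends m to
   f |-> f.m_x placed in degree y, and the counit and coassociativity axioms
   are just the unit and composition laws of the functor M. *)

Lemma mem_In (T : eqType) (x : T) (s : seq T) : x \in s -> List.In x s.
Proof. by elim: s => //= a s IHs; rewrite in_cons => /orP[/eqP->|/IHs]; auto. Qed.

Lemma linear_inj_eq0 (R : pzRingType) (U V : lmodType R) (f : U -> V)
    (lin_f : linear f) (inj_f : injective f) u :
  (f u == 0) = (u == 0).
Proof.
pose g : {linear U -> V} := HB.pack f (GRing.isLinear.Build R U V *:%R f lin_f).
exact: (@raddf_eq0 _ _ g).
Qed.

Lemma linear_vbasis_neq0 (R : fieldType) (U : vectType R) (V : lmodType R)
    (f : {linear U -> V}) v :
  f v != 0 -> exists2 b, b \in vbasis fullv & f b != 0.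
Proof.
move=> /eqP fv0; have [//|no_b] := pselect (exists2 b, b \in vbasis fullv & f b != 0).
case: fv0; rewrite [v](coord_vbasis (memvf v)) linear_sum big1 // => i _.
rewrite linearZ /=; have [->|nz] := eqVneq (f (vbasis fullv)`_i) 0; first by rewrite scaler0.
by case: no_b; exists (vbasis fullv)`_i; rewrite ?mem_nth ?size_tuple.
Qed.

Section ActionSupport.
Variables (k : fieldType) (E : klinCat k) (M : lfModule E).

HB.instance Definition _ (x y : Obj E) (f : HomE E x y) :=
  GRing.isLinear.Build k (Mob M x) (Mob M y) *:%R (act M f) (@act_linr _ _ M _ _ f).

Definition acts_nonzero (x y : Obj E) :=
  exists (f : HomE E x y) (v : Mob M x), act M f v != 0.

Definition finite_action_support :=
  forall x, exists s : seq (Obj E), forall y, acts_nonzero x y -> List.In y s.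

Lemma iso_Ups_finite_action_support (C : comodule E) :
  iso_Ups M C -> finite_action_support.
Proof.
move=> [phi [lin_phi [inj_phi [_ [_ phi_act]]]]] x.
have [supp suppP] := choice (@coact_fin _ _ C).
exists (List.flat_map (fun b => map snd (supp (phi x b))) (vbasis fullv)).
move=> y [f [v /linear_vbasis_neq0[b b_basis fb_neq0]]].
apply/List.in_flat_map; exists b; split; first exact: mem_In.
apply: (List.in_map snd _ (x, y)); apply: (suppP _ _ _ f).
by rewrite -[coact _ _ _]phi_act (linear_inj_eq0 (lin_phi y) (inj_phi y)).
Qed.

End ActionSupport.

Section DirectSum.
Variables (k : fieldType) (E : klinCat k) (M : lfModule E).

Definition finsupp (m : forall x, Mob M x) :=
  exists s : seq (Obj E), forall x, m x != 0 -> List.In x s.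

Record dsum := DSum {
  dsum_fun :> forall x, Mob M x;
  dsum_finsupp : finsupp dsum_fun
}.

Lemma dsumP (m n : dsum) : (forall x, m x = n x) -> m = n.
Proof.
case: m n => [m m_fin] [n n_fin] /= mn.
have {}mn := functional_extensionality_dep mn; subst n.
by congr DSum; exact: Prop_irrelevance.
Qed.

HB.instance Definition _ := gen_eqMixin dsum.
HB.instance Definition _ := gen_choiceMixin dsum.

Lemma finsupp0 : finsupp (fun x => 0).
Proof. by exists [::] => x; rewrite eqxx. Qed.

Lemma finsuppD (m n : dsum) : finsupp (fun x => m x + n x).
Proof.
have [[s m_s] [t n_t]] := (dsum_finsupp m, dsum_finsupp n).
exists (s ++ t) => x mn_x; apply: List.in_or_app.
have [m_x0|/m_s] := eqVneq (m x) 0; last by left.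
by right; apply: n_t; rewrite m_x0 add0r in mn_x.
Qed.

Lemma finsuppN (m : dsum) : finsupp (fun x => - m x).
Proof. by have [s m_s] := dsum_finsupp m; exists s => x; rewrite oppr_eq0 => /m_s. Qed.

Lemma finsuppZ a (m : dsum) : finsupp (fun x => a *: m x).
Proof.
have [s m_s] := dsum_finsupp m; exists s => x am_x; apply: m_s.
by apply: contraNneq am_x => ->; rewrite scaler0.
Qed.

Definition dsum0 := DSum finsupp0.
Definition dsum_add m n := DSum (finsuppD m n).
Definition dsum_opp m := DSum (finsuppN m).
Definition dsum_scale a m := DSum (finsuppZ a m).

Lemma dsum_addA : associative dsum_add.
Proof. by move=> m n p; apply: dsumP => x /=; rewrite addrA. Qed.
Lemma dsum_addC : commutative dsum_add.
Proof. by move=> m n; apply: dsumP => x /=; rewrite addrC. Qed.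
Lemma dsum_add0 : left_id dsum0 dsum_add.
Proof. by move=> m; apply: dsumP => x /=; rewrite add0r. Qed.
Lemma dsum_addN : left_inverse dsum0 dsum_opp dsum_add.
Proof. by move=> m; apply: dsumP => x /=; rewrite addNr. Qed.

HB.instance Definition _ :=
  GRing.isZmodule.Build dsum dsum_addA dsum_addC dsum_add0 dsum_addN.

Lemma dsum_scaleA a b m : dsum_scale a (dsum_scale b m) = dsum_scale (a * b) m.
Proof. by apply: dsumP => x /=; rewrite scalerA. Qed.
Lemma dsum_scale1 : left_id 1 dsum_scale.
Proof. by move=> m; apply: dsumP => x /=; rewrite scale1r. Qed.
Lemma dsum_scaleDr : right_distributive dsum_scale +%R.
Proof. by move=> a m n; apply: dsumP => x /=; rewrite scalerDr. Qed.
Lemma dsum_scaleDl m : {morph dsum_scale^~ m : a b / a + b}.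
Proof. by move=> a b; apply: dsumP => x /=; rewrite scalerDl. Qed.

HB.instance Definition _ := GRing.Zmodule_isLmodule.Build k dsum
  dsum_scaleA dsum_scale1 dsum_scaleDr dsum_scaleDl.

Lemma dsum_sumE (I : Type) (r : seq I) (F : I -> dsum) x :
  (\sum_(i <- r) F i) x = \sum_(i <- r) F i x.
Proof. by apply: (big_rec2 (fun (m : dsum) v => m x = v)) => // i m v _ <-. Qed.

Definition single (y : Obj E) (v : Mob M y) : forall z, Mob M z :=
  fun z => if pselect (y = z) is left yz then eq_rect y (Mob M) v z yz else 0.

Lemma single_id y (v : Mob M y) : single v y = v.
Proof. by rewrite /single; case: pselect => // yy; rewrite (Prop_irrelevance yy erefl). Qed.

Lemma single_neq y z (v : Mob M y) : y <> z -> single v z = 0.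
Proof. by rewrite /single; case: pselect. Qed.

Lemma finsupp_single y (v : Mob M y) : finsupp (single v).
Proof.
by exists [:: y] => z; rewrite /single; case: pselect => [yz|]; [left|rewrite eqxx].
Qed.

Definition dsum_single y (v : Mob M y) := DSum (finsupp_single v).

Lemma dsum_single_is_linear y : linear (@dsum_single y).
Proof.
move=> a u v; apply: dsumP => z /=.
by rewrite /single; case: pselect => [yz|_]; [case: z / yz | rewrite scaler0 addr0].
Qed.

HB.instance Definition _ y := GRing.isLinear.Build k (Mob M y) dsum *:%R
  (@dsum_single y) (@dsum_single_is_linear y).

Lemma dsum_single_inj y : injective (@dsum_single y).
Proof. by move=> u v /(congr1 (fun m : dsum => m y)); rewrite /= !single_id. Qed.

Lemma sum_single_NoDup (m : dsum) (xs : seq (Obj E)) z : List.NoDup xs ->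
  \sum_(x <- xs) single (m x) z = if `[< List.In z xs >] then m z else 0.
Proof.
elim: xs => [|y xs IHxs] nodup; first by rewrite big_nil asboolF.
move: nodup => /List.NoDup_cons_iff[y_xs /IHxs sum_xs].
rewrite big_cons sum_xs -[List.In z (y :: xs)]/(y = z \/ List.In z xs) asbool_or.
have [<-|yz] := pselect (y = z).
  by rewrite single_id (asboolF y_xs) (asboolT (erefl y)) addr0.
by rewrite single_neq // add0r (asboolF yz).
Qed.

End DirectSum.

Section DirectSumComodule.
Variables (k : fieldType) (E : klinCat k) (M : lfModule E).
Hypothesis M_fin : finite_action_support M.

Definition dsum_coact x y (m : dsum M) (f : HomE E x y) : dsum M :=
  dsum_single (act M f (m x)).

Lemma dsum_coact_linl x y (f : HomE E x y) a (m1 m2 : dsum M) :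
  dsum_coact (a *: m1 + m2) f = a *: dsum_coact m1 f + dsum_coact m2 f.
Proof. by rewrite /dsum_coact /= !linearP. Qed.

Lemma dsum_coact_linr x y (m : dsum M) a (f1 f2 : HomE E x y) :
  dsum_coact m (a *: f1 + f2) = a *: dsum_coact m f1 + dsum_coact m f2.
Proof. by rewrite /dsum_coact act_linl linearP. Qed.

Lemma dsum_coact_fin (m : dsum M) : exists s : seq (Obj E * Obj E),
  forall x y (f : HomE E x y), dsum_coact m f != 0 -> List.In (x, y) s.
Proof.
have [[s m_s] [S S_fin]] := (dsum_finsupp m, choice M_fin).
exists (List.flat_map (fun x => map (pair x) (S x)) s) => x y f.
rewrite /dsum_coact raddf_eq0; last exact: dsum_single_inj.
move=> fm_x.
apply/List.in_flat_map; exists x; split; last by apply/List.in_map/S_fin; exists f, (m x).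
by apply: m_s; apply: contraNneq fm_x => ->; rewrite linear0.
Qed.

Lemma dsum_coact_counit (m : dsum M) : exists xs : seq (Obj E),
  List.NoDup xs /\
  (forall x, dsum_coact m (idm E x) != 0 -> List.In x xs) /\
  m = \sum_(x <- xs) dsum_coact m (idm E x).
Proof.
have [s m_s] := dsum_finsupp m.
pose xs := List.nodup (fun x y : Obj E => pselect (x = y)) s.
have coact_idm x : dsum_coact m (idm E x) = dsum_single (m x).
  by rewrite /dsum_coact act_id.
exists xs; split; first exact: List.NoDup_nodup.
split=> [x|].
  rewrite coact_idm raddf_eq0; last exact: dsum_single_inj.
  by move=> /m_s x_s; apply/List.nodup_In.
apply: dsumP => z; under eq_bigr => x _ do rewrite coact_idm.
rewrite dsum_sumE /= sum_single_NoDup; last exact: List.NoDup_nodup.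
case: asboolP => // z_xs.
have [//|/m_s z_s] := eqVneq (m z) 0.
by case: z_xs; apply/List.nodup_In.
Qed.

Lemma dsum_coact_coassoc x z y (m : dsum M) (g : HomE E x z) (h : HomE E z y) :
  dsum_coact (dsum_coact m g) h = dsum_coact m (Defs.comp E h g).
Proof. by rewrite /dsum_coact /= single_id act_comp. Qed.

Lemma dsum_coact_coassoc0 x z z' y (m : dsum M) (g : HomE E x z) (h : HomE E z' y) :
  z <> z' -> dsum_coact (dsum_coact m g) h = 0.
Proof. by move=> zz'; rewrite /dsum_coact /= single_neq // !linear0. Qed.

Definition dsum_comodule : comodule E :=
  Comodule dsum_coact_linl dsum_coact_linr dsum_coact_fin dsum_coact_counit
    dsum_coact_coassoc dsum_coact_coassoc0.

Lemma dsum_comodule_iso : iso_Ups M dsum_comodule.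
Proof.
exists (fun x v => dsum_single v); split; first by move=> x; exact: linearP.
split; first by move=> x; exact: dsum_single_inj.
split.
  by move=> x v; exists (dsum_single v); rewrite /e_act /= /dsum_coact /= single_id act_id.
split; first by move=> x _ [m ->]; exists (act M (idm E x) (m x)).
by move=> x y f v; rewrite /ev_act /= /dsum_coact /= single_id.
Qed.

End DirectSumComodule.

Theorem theorem2p7 (k : fieldType) (E : klinCat k) (M : lfModule E) :
  lf_cat E ->
  ((exists C : comodule E, iso_Ups M C) <->
   (forall x : Obj E, exists s : seq (Obj E),
      forall y : Obj E,
        (exists (f : HomE E x y) (v : Mob M x), act M f v != 0) -> List.In y s)).
Proof.
move=> _; split => [[C]|M_fin]; first exact: iso_Ups_finite_action_support.
by exists (dsum_comodule M_fin); exact: dsum_comodule_iso.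
Qed.
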